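(* The graphs $\mathcal{F}_1$, $\mathcal{F}_2$ and $\mathcal{F}_3$ are non-Mengerian.
   Context: Graphs are finite, loopless, and may have parallel edges. A temporal graph is a pair $(G,\lambda)$ with $\lambda:E(G)\to\mathbb{Z}_{>0}$. A temporal $s,t$-path is an $s,t$-path $(s=v_1,e_1,\dots,e_{k-1},v_k=t)$ of $G$ (no repeated vertices) with $\lambda(e_1)\le\dots\le\lambda(e_{k-1})$. Two temporal $s,t$-paths are disjoint if they share no vertex other than $s,t$. For distinct non-adjacent $s,t$, a temporal $s,t$-vertex cut is a set $S\subseteq V(G)\setminus\{s,t\}$ such that $G-S$ (with $\lambda$ restricted) has no temporal $s,t$-path. $p_{G,\lambda}(s,t)$ is the maximum number of pairwise disjoint temporal $s,t$-paths and $c_{G,\lambda}(s,t)$ the minimum size of a temporal $s,t$-vertex cut. $G$ is Mengerian if $p_{G,\lambda}(s,t)=c_{G,\lambda}(s,t)$ for every $\lambda$ and every pair of distinct non-adjacent $s,t\in V(G)$. $\mathcal{F}_3$ is the gem: the simple graph on vertices $s,u,v,t,x$ with edges $su,uv,vt,xs,xu,xv,xt$. $\mathcal{F}_1$ is the graph on vertices $s,u,v,t,w,w'$ with simple edges $su,uv,vt,sw,wt,uw',w'v$ and exactly two parallel edges between $w$ and $w'$. $\mathcal{F}_2$ is the graph on vertices $s,u,v,t,w,w'$ with simple edges $su,uv,vt,sw,uw,w'v,w't$ and exactly two parallel edges between $w$ and $w'$. *)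

From mathcomp Require Import all_boot.
From mathcomp Require Import boolp.
Set Implicit Arguments. Unset Strict Implicit. Unset Printing Implicit Defensive.

(* A (multi)graph: vertex type V, edge type E (both finite), and each edge e
   has an (unordered) pair of endpoints [ends e].  Parallel edges are distinct
   elements of E with the same endpoints. *)
Section Temporal.
Variables (V E : finType) (ends : E -> V * V).

Definition joins (e : E) (x y : V) : bool :=
  (ends e == (x, y)) || (ends e == (y, x)).

Definition adjacent (x y : V) : bool := [exists e, joins e x y].

(* A path starting at s is given by the sequence of (edge, next vertex) steps. *)
Fixpoint walk_ok (x : V) (p : seq (E * V)) : bool :=
  match p with
  | [::] => true
  | (e, y) :: p' => joins e x y && walk_ok y p'
  end.

Definition tpath (lam : E -> nat) (s t : V) (p : seq (E * V)) : bool :=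
  [&& walk_ok s p, uniq (s :: map snd p), last s (map snd p) == t
    & sorted leq (map (fun ev => lam ev.1) p)].

Definition pverts (s : V) (p : seq (E * V)) : seq V := s :: map snd p.

Definition disjoint_paths (s t : V) (p q : seq (E * V)) : bool :=
  all (fun v => (v \notin pverts s q) || (v == s) || (v == t)) (pverts s p).

Definition has_disjoint_tpaths (lam : E -> nat) (s t : V) (k : nat) : Prop :=
  exists ps : seq (seq (E * V)),
    [/\ size ps = k, all (tpath lam s t) ps
      & pairwise (fun p q => disjoint_paths s t p q) ps].

Definition tcut (lam : E -> nat) (s t : V) (S : {set V}) : Prop :=
  [/\ s \notin S, t \notin S &
      forall p, tpath lam s t p -> exists2 v, v \in map snd p & v \in S].

(* p_{G,lam}(s,t): maximum number of pairwise disjoint temporal s,t-paths.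
   (Any family of pairwise disjoint s,t-paths, s,t non-adjacent, has at most
   #|V| members, since each path has an internal vertex.) *)
Definition pval (lam : E -> nat) (s t : V) : nat :=
  \max_(k < #|V|.+1 | `[< has_disjoint_tpaths lam s t k >]) k.

(* c_{G,lam}(s,t): minimum size of a temporal s,t-vertex cut
   (for non-adjacent s,t the set V \ {s,t} is always a cut). *)
Definition cval (lam : E -> nat) (s t : V) : nat :=
  \big[minn/#|V|]_(S : {set V} | `[< tcut lam s t S >]) #|S|.

Definition Mengerian : Prop :=
  forall lam : E -> nat, (forall e, 0 < lam e) ->
  forall s t : V, s != t -> ~~ adjacent s t -> pval lam s t = cval lam s t.

End Temporal.

Definition graph_ends (n : nat) (es : seq (nat * nat)) (e : 'I_(size es))
  : 'I_n.+1 * 'I_n.+1 :=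
  let: (a, b) := nth (0, 0) es e in (inord a, inord b).

(* F1: s=0, u=1, v=2, t=3, w=4, w'=5 *)
Definition F1_edges : seq (nat * nat) :=
  [:: (0,1); (1,2); (2,3); (0,4); (4,3); (1,5); (5,2); (4,5); (4,5)].
(* F2: s=0, u=1, v=2, t=3, w=4, w'=5 *)
Definition F2_edges : seq (nat * nat) :=
  [:: (0,1); (1,2); (2,3); (0,4); (1,4); (5,2); (5,3); (4,5); (4,5)].
(* F3 (gem): s=0, u=1, v=2, t=3, x=4 *)
Definition F3_edges : seq (nat * nat) :=
  [:: (0,1); (1,2); (2,3); (4,0); (4,1); (4,2); (4,3)].

Definition F1_ends := @graph_ends 5 F1_edges.
Definition F2_ends := @graph_ends 5 F2_edges.
Definition F3_ends := @graph_ends 4 F3_edges.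

From mathcomp Require Import all_boot boolp zmodp.
Set Implicit Arguments. Unset Strict Implicit. Unset Printing Implicit Defensive.

(* For each graph there is a labelling under which any two temporal s,t-paths
   share an internal vertex, so p = 1, while every internal vertex is avoided
   by some temporal s,t-path, so c >= 2.  Both facts are checked by
   enumerating the (finitely many) temporal s,t-paths. *)

Section MengerGap.
Variables (V E : finType) (ends : E -> V * V) (lam : E -> nat) (s t : V).

Lemma pval_le1 :
  (forall p q, tpath ends lam s t p -> tpath ends lam s t q ->
     ~~ disjoint_paths s t p q) ->
  pval ends lam s t <= 1.
Proof.
move=> meet; apply/bigmax_leqP => k /asboolP[[|p [|q ps]] [<- tps pw]] //.
case/and3P: tps => tp tq _; case/andP: pw => /andP[dpq _] _.
by move: (meet p q tp tq); rewrite dpq.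
Qed.

Lemma cval_ge2 : s != t ->
  (exists p, tpath ends lam s t p) ->
  (forall v, v != s -> v != t -> exists2 p, tpath ends lam s t p & v \notin map snd p) ->
  2 <= cval ends lam s t.
Proof.
move=> neq_st [p0 tp0] avoid; apply: (big_ind (leq 2)).
- by rewrite (cardD1 s) (cardD1 t) !inE eq_sym neq_st.
- by move=> a b; rewrite leq_min => -> ->.
move=> S /asboolP[sS tS cutS]; rewrite leqNgt ltnS leq_eqVlt ltnS leqn0.
apply/negP => /orP[/cards1P[v defS] | /eqP/cards0_eq S0].
- have vS : v \in S by rewrite defS set11.
  have neq_vs : v != s by apply: contraNneq sS => <-.
  have neq_vt : v != t by apply: contraNneq tS => <-.
  have [p tp vp] := avoid v neq_vs neq_vt.
  have [w wp] := cutS p tp; rewrite defS inE => /eqP wv.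
  by move: vp; rewrite -wv wp.
- by have [w _] := cutS p0 tp0; rewrite S0 inE.
Qed.

Lemma not_Mengerian_of_gap :
  (forall e, 0 < lam e) -> s != t -> ~~ adjacent ends s t ->
  pval ends lam s t < cval ends lam s t -> ~ Mengerian ends.
Proof.
move=> lam_pos neq_st nadj gap /(_ lam lam_pos s t neq_st nadj) eq_pc.
by rewrite eq_pc ltnn in gap.
Qed.

End MengerGap.

Section TemporalPathEnumeration.
Variables (V E : finType) (ends : E -> V * V).

(* Exhaustive lists of edges and vertices are taken as parameters instead of
   [enum]: [enum] and [#|_|] are locked, and the checks below must reduce
   under [vm_compute]. *)
Variables (es : seq E) (vs : seq V).
Hypotheses (es_full : forall e, e \in es) (vs_full : forall v, v \in vs).

Definition steps_from (x : V) : seq (E * V) :=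
  [seq ey <- [seq (e, y) | e <- es, y <- vs] | joins ends ey.1 x ey.2].

Fixpoint walks_upto (n : nat) (x : V) : seq (seq (E * V)) :=
  [::] :: if n is n'.+1 then
            [seq ey :: w | ey <- steps_from x, w <- walks_upto n' ey.2]
          else [::].

Lemma mem_walks_upto n x p :
  walk_ok ends x p -> size p <= n -> p \in walks_upto n x.
Proof.
elim: n x p => [|n IH] x [|[e y] p] //=; rewrite ?mem_head //.
case/andP=> exy wp sz; rewrite in_cons; apply/orP; right.
apply/allpairsPdep; exists (e, y), p; split=> //.
  by rewrite mem_filter /= exy; apply/allpairsP; exists (e, y).
exact: IH.
Qed.

Variables (lam : E -> nat) (s t : V).

Definition tpaths : seq (seq (E * V)) :=
  [seq p <- walks_upto (size vs) s | tpath ends lam s t p].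

Lemma mem_tpaths p : (p \in tpaths) = tpath ends lam s t p.
Proof.
rewrite mem_filter andb_idr // => /and4P[wp up _ _].
apply: mem_walks_upto => //; apply: ltnW.
have card_vs : #|V| <= size vs.
  by apply: leq_trans (card_size vs); apply/subset_leq_card/subsetP => v _.
apply: leq_trans card_vs.
by rewrite -(size_map snd) -[X in X <= _]/(size (pverts s p)) -(card_uniqP up) max_card.
Qed.

Definition tpaths_pairwise_meet : bool :=
  all (fun p => all (fun q => ~~ disjoint_paths s t p q) tpaths) tpaths.

Definition tpaths_avoid_each_vertex : bool :=
  (tpaths != [::]) &&
  all (fun v => (v \in [:: s; t]) || has (fun p => v \notin map snd p) tpaths) vs.

Lemma pval_le1_of_pairwise_meet : tpaths_pairwise_meet -> pval ends lam s t <= 1.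
Proof.
move=> /allP meet; apply: pval_le1 => p q; rewrite -!mem_tpaths => tp tq.
exact: (allP (meet p tp)).
Qed.

Lemma cval_ge2_of_avoid_each_vertex :
  s != t -> tpaths_avoid_each_vertex -> 2 <= cval ends lam s t.
Proof.
move=> neq_st /andP[ne /allP avoid]; apply: cval_ge2 => //.
  move: ne; case def_tpaths: tpaths => [|p0 ps] // _.
  by exists p0; rewrite -mem_tpaths def_tpaths mem_head.
move=> v neq_vs neq_vt; move: (avoid v (vs_full v)).
rewrite !inE (negbTE neq_vs) (negbTE neq_vt) /=.
by case/hasP=> p; rewrite mem_tpaths; exists p.
Qed.

Definition Menger_counterexample : bool :=
  [&& all (fun e => 0 < lam e) es, s != t, ~~ has (fun e => joins ends e s t) es,
      tpaths_pairwise_meet & tpaths_avoid_each_vertex].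

Lemma Menger_counterexample_not_Mengerian : Menger_counterexample -> ~ Mengerian ends.
Proof.
case/and5P=> /allP lam_pos neq_st nadj meet avoid.
have {}lam_pos e : 0 < lam e by exact: lam_pos.
have {}nadj : ~~ adjacent ends s t.
  by apply: contra nadj => /existsP[e est]; apply/hasP; exists e.
apply: (not_Mengerian_of_gap lam_pos neq_st nadj).
exact: leq_ltn_trans (pval_le1_of_pairwise_meet meet)
                     (cval_ge2_of_avoid_each_vertex neq_st avoid).
Qed.

End TemporalPathEnumeration.

Lemma mem_mkseq_inZp n (i : 'I_n.+1) : i \in mkseq inZp n.+1.
Proof. by apply/mapP; exists (val i); rewrite ?mem_iota ?ltn_ord ?valZpK. Qed.

(* [inord] goes through the opaque [idP] and does not reduce; [inZp] does. *)
Lemma graph_endsE n es :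
  all (fun ab => (ab.1 < n.+1) && (ab.2 < n.+1)) es ->
  @graph_ends n es = fun e => let: (a, b) := nth (0, 0) es e in (inZp a, inZp b).
Proof.
move=> /allP es_small; apply: funext => e; rewrite /graph_ends.
have := es_small _ (mem_nth (0, 0) (ltn_ord e)).
case: (nth _ _ _) => a b /andP[a_small b_small].
by congr pair; apply: val_inj; rewrite /= inordK ?modn_small.
Qed.

Theorem lemma1 :
  ~ Mengerian F1_ends /\ ~ Mengerian F2_ends /\ ~ Mengerian F3_ends.
Proof.
rewrite /F1_ends /F2_ends /F3_ends !graph_endsE //; split; [|split].
- apply: (Menger_counterexample_not_Mengerian
            (mem_mkseq_inZp (n := 8)) (mem_mkseq_inZp (n := 5))
            (lam := fun e => nth 0 [:: 1; 1; 2; 2; 1; 1; 2; 2; 1] e) (s := inZp 0) (t := inZp 3)).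
  by vm_compute.
- apply: (Menger_counterexample_not_Mengerian
            (mem_mkseq_inZp (n := 8)) (mem_mkseq_inZp (n := 5))
            (lam := fun e => nth 0 [:: 1; 1; 2; 2; 1; 2; 1; 2; 1] e) (s := inZp 0) (t := inZp 3)).
  by vm_compute.
- apply: (Menger_counterexample_not_Mengerian
            (mem_mkseq_inZp (n := 6)) (mem_mkseq_inZp (n := 4))
            (lam := fun e => nth 0 [:: 1; 1; 2; 2; 1; 2; 1] e) (s := inZp 0) (t := inZp 3)).
  by vm_compute.
Qed.
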